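(* Let $\Omega\subset\mathbb{R}^2$ be open and bounded and let $(y^l)_l\subset L^1(\Omega)$ satisfy $\big|\Omega\setminus\bigcup_{n\in\mathbb{N}}\bigcap_{l\ge n}\{|y^n-y^l|\le1\}\big|=0$. Then there is a (not relabeled) subsequence and an increasing continuous function $\psi:[0,\infty)\to[0,\infty)$ with $\lim_{t\to\infty}\psi(t)=\infty$ such that $\int_\Omega\psi(|y^l|)\le C$ for a constant $C>0$ independent of $l$.
   Context: $|\cdot|$ denotes Lebesgue measure. *)

From HB Require Import structures.
From mathcomp Require Import all_boot all_order all_algebra.
From mathcomp Require Import all_classical all_reals all_analysis.
Set Implicit Arguments. Unset Strict Implicit. Unset Printing Implicit Defensive.
Import Order.TTheory GRing.Theory Num.Theory.
Import numFieldNormedType.Exports.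
Local Open Scope classical_set_scope.
Local Open Scope ring_scope.

Definition leb2 (R : realType) :=
  ((@lebesgue_measure R) \x (@lebesgue_measure R))%E.
Arguments leb2 R : clear implicits.

From HB Require Import structures.
From mathcomp Require Import all_boot all_order all_algebra.
From mathcomp Require Import all_classical all_reals all_analysis.
From mathcomp Require Import measurable_realfun lra.
Set Implicit Arguments. Unset Strict Implicit. Unset Printing Implicit Defensive.
Import Order.TTheory GRing.Theory Num.Theory.
Import numFieldNormedType.Exports.
Local Open Scope classical_set_scope.
Local Open Scope ring_scope.

(* No subsequence is needed: by hypothesis almost every [x] has an [n] with
   [|y l x - y n x| <= 1] for [l >= n], so [sup_l |y l x|] is finite a.e.  Hence
   the sets [E_n = {sup_l |y l| > n}] decrease to a null set and, [Omega] having
   finite measure, [|E_n| -> 0]; pick [a_0 < a_1 < ...] with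
   [|E_(a_k)| <= 2^-(k+1)].  Then [psi t = 1 - exp(-t) + sum_k ramp (t - a_k)],
   with [ramp u = min (max u 0) 1], is continuous, strictly increasing and
   unbounded, and [psi |y l| <= 1 + sum_k 1_(E_(a_k))], whose integral is at most
   [|Omega| + 1]. *)

Lemma homo_ltn_geq_id (a : nat -> nat) : {homo a : m n / (m < n)%N} ->
  forall k, (k <= a k)%N.
Proof. by move=> ha; elim=> // k IHk; exact: leq_ltn_trans IHk (ha _ _ _). Qed.

Section ramp.
Variable R : realType.

Definition ramp (u : R) : R := Num.min (Num.max u 0) 1.

Lemma ramp_ge0 u : 0 <= ramp u.
Proof. by rewrite /ramp le_min le_max lexx orbT ler01. Qed.

Lemma ramp_le1 u : ramp u <= 1.
Proof. by rewrite /ramp ge_min lexx orbT. Qed.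

Lemma ramp_eq0 u : u <= 0 -> ramp u = 0.
Proof. by move=> u0; rewrite /ramp max_r// min_l. Qed.

Lemma ramp_eq1 u : 1 <= u -> ramp u = 1.
Proof. by move=> u1; rewrite /ramp max_l ?(le_trans ler01)// min_r. Qed.

Lemma ramp_le_indicator u : ramp u <= ((0 < u)%R)%:R.
Proof. by case: ltP => [_|/ramp_eq0->//]; exact: ramp_le1. Qed.

Lemma ramp_homo : {homo ramp : u v / u <= v}.
Proof. by move=> u v uv; apply: le_min2 => //; exact: le_max2. Qed.

Lemma continuous_ramp : continuous ramp.
Proof.
move=> x; apply: (@continuous_min R R (fun u : R => Num.max u 0) (cst 1) x).
  by apply: (@continuous_max R R id (cst 0) x); [exact: cvg_id|exact: cvg_cst].
exact: cvg_cst.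
Qed.

End ramp.

Section growth.
Variables (R : realType) (a : nat -> nat).
Hypothesis a_incr : {homo a : m n / (m < n)%N}.

Definition ramp_sum N (t : R) := \sum_(k < N) ramp (t - (a k)%:R).

(* Since [k <= a k], the ramps with [k > t] vanish at [t], so the truncated sum
   is the full series [\sum_k ramp (t - a k)]; the term [1 - expR (- t)] makes
   the function strictly increasing. *)
Definition growth (t : R) := (1 - expR (- t)) + ramp_sum (Num.truncn t).+1 t.

Lemma ramp_sum_ge0 N t : 0 <= ramp_sum N t.
Proof. by apply: sumr_ge0 => k _; exact: ramp_ge0. Qed.

Lemma ramp_sum_homo N : {homo ramp_sum N : s t / s <= t}.
Proof. by move=> s t st; apply: ler_sum => k _; apply: ramp_homo; rewrite lerB. Qed.

Lemma ramp_sum_homoN t : {homo ramp_sum ^~ t : M N / (M <= N)%N >-> M <= N}.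
Proof.
move=> M N /subnK <-; elim: (N - M)%N => // n IHn.
by rewrite addSn /ramp_sum big_ord_recr /= -/(ramp_sum _ t) ler_wpDr ?ramp_ge0.
Qed.

Lemma ramp_sum_stationary N N' t : t <= N%:R -> (N <= N')%N -> ramp_sum N' t = ramp_sum N t.
Proof.
move=> tN /subnK <-; elim: (N' - N)%N => // n IHn.
rewrite addSn /ramp_sum big_ord_recr /= -/(ramp_sum _ t) IHn ramp_eq0 ?addr0//.
rewrite subr_le0 (le_trans tN)// ler_nat (leq_trans _ (homo_ltn_geq_id a_incr _))//.
exact: leq_addl.
Qed.

Lemma growthE N t : t <= N%:R -> growth t = (1 - expR (- t)) + ramp_sum N t.
Proof.
move=> tN; rewrite /growth; congr (_ + _).
have tT : t <= (Num.truncn t).+1%:R by rewrite ltW// truncnS_gt.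
by rewrite -(ramp_sum_stationary tT (leq_maxl _ N)) (ramp_sum_stationary tN (leq_maxr _ N)).
Qed.

Lemma growth_lt s t : s < t -> growth s < growth t.
Proof.
move=> st; have tN : t <= (Num.truncn t).+1%:R by rewrite ltW// truncnS_gt.
rewrite (growthE (le_trans (ltW st) tN)) (growthE tN).
apply: ltr_leD; last exact/ramp_sum_homo/ltW.
by rewrite ltrD2l ltrN2 ltr_expR ltrN2.
Qed.

Lemma growth_ge0 t : 0 <= t -> 0 <= growth t.
Proof. by move=> t0; rewrite addr_ge0 ?ramp_sum_ge0// subr_ge0 expR_le1 oppr_le0. Qed.

Lemma growth_le_count t :
  growth t <= 1 + \sum_(k < (Num.truncn t).+1) (((a k)%:R < t)%R)%:R.
Proof.
rewrite lerD// ?lerBlDr ?lerDl ?expR_ge0// /ramp_sum.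
by apply: ler_sum => k _; rewrite -subr_gt0; exact: ramp_le_indicator.
Qed.

Lemma continuous_ramp_sum N : continuous (ramp_sum N).
Proof.
elim: N => [|N IHN] t.
  by rewrite /ramp_sum; under eq_fun do rewrite big_ord0; exact: cvg_cst.
have -> : ramp_sum N.+1 = ramp_sum N + (fun s => ramp (s - (a N)%:R)).
  by apply/funext => s; rewrite /ramp_sum big_ord_recr.
apply: continuousD; first exact: IHN.
have shift_cont : continuous (fun s : R => s - (a N)%:R).
  by move=> s; apply: cvgB; [exact: cvg_id|exact: cvg_cst].
exact: continuous_comp (shift_cont t) (@continuous_ramp R _).
Qed.

Lemma continuous_growth : continuous growth.
Proof.
move=> t0; pose N := (Num.truncn t0).+2.
have near_growthE : \forall t \near t0, (1 - expR (- t)) + ramp_sum N t = growth t.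
  apply: filterS (nbhsx_ballx t0 _ ltr01) => t; rewrite /ball /= => t0t.
  rewrite (growthE (N := N))//.
  have := truncnS_gt t0; move: t0t; rewrite /N -addn1 natrD ltr_norml; lra.
apply: cvg_trans (near_eq_cvg near_growthE) _; rewrite -(nbhs_singleton near_growthE).
apply: cvgD; last exact: continuous_ramp_sum.
apply: cvgB; first exact: cvg_cst.
apply: (@continuous_comp _ _ _ (fun u : R => - u) expR); first exact: (cvgN cvg_id).
exact: continuous_expR.
Qed.

Lemma ramp_sum_eqN N t : (a N)%:R + 1 <= t -> ramp_sum N t = N%:R.
Proof.
move=> tN; rewrite /ramp_sum (eq_bigr (fun=> 1)) ?sumr_const ?card_ord// => k _.
apply: ramp_eq1; rewrite lerBrDr addrC (le_trans _ tN)// lerD2r ler_nat.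
exact/ltnW_homo/ltnW.
Qed.

Lemma growth_cvgy : growth t @[t --> +oo] --> +oo.
Proof.
apply/cvgryPge => A; pose N := (Num.truncn A).+1.
near=> t.
have tN : (a N)%:R + 1 <= t by near: t; apply: nbhs_pinfty_ge; rewrite num_real.
have NT : (N <= (Num.truncn t).+1)%N.
  have N_le_aN : N%:R <= (a N)%:R + 1 :> R by rewrite ler_wpDr// ler_nat homo_ltn_geq_id.
  by rewrite -(ler_nat R) ltW// (le_lt_trans (le_trans N_le_aN tN) (truncnS_gt t)).
rewrite (le_trans (ltW (truncnS_gt A)))// -(ramp_sum_eqN tN).
rewrite (le_trans (ramp_sum_homoN t NT))// lerDr subr_ge0 expR_le1 oppr_le0.
by rewrite (le_trans _ tN)// addr_ge0.
Unshelve. all: by end_near.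
Qed.

End growth.

Lemma increasing_eventually_choice (P : nat -> nat -> Prop) :
  (forall k, exists N, forall n, (N <= n)%N -> P k n) ->
  exists a : nat -> nat, {homo a : m n / (m < n)%N} /\ forall k, P k (a k).
Proof.
move=> /choice[N HN].
pose a := fix a k := if k is k'.+1 then maxn (a k').+1 (N k) else N 0%N.
exists a; split; first by apply: (homo_ltn ltn_trans) => k /=; exact: leq_maxl.
by move=> k; apply: HN; case: k => [|k] //=; rewrite leq_maxr.
Qed.

Lemma bounded_if_eventually_close (R : realType) (u : nat -> R) n :
  (forall l, (n <= l)%N -> `|u n - u l| <= 1) -> exists K, forall l, `|u l| <= K.
Proof.
move=> close; pose m := \big[Num.max/0]_(j < n.+1) `|u j|.
have le_m j : (j <= n)%N -> `|u j| <= m.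
  by rewrite -ltnS => jn; exact: (le_bigmax _ (fun j : 'I_n.+1 => `|u j|) (Ordinal jn)).
exists (m + 1) => l; have [ln|nl] := leqP l n; first by rewrite ler_wpDr// le_m.
have -> : u l = u n - (u n - u l) by rewrite opprB addrC subrK.
by rewrite (le_trans (ler_normB _ _))// lerD ?le_m ?close// ltnW.
Qed.

Section tail_sets.
Context d (T : measurableType d) (R : realType).
Variables (mu : {measure set T -> \bar R}) (D : set T) (f : nat -> T -> R).
Hypotheses (mD : measurable D) (mf : forall l, measurable_fun D (f l)).

Definition exceed (n : nat) : set T := \bigcup_l (D `&` [set x | n%:R < `|f l x|]).

Lemma exceed_sub n : exceed n `<=` D.
Proof. by move=> x [l _ []]. Qed.

Lemma measurable_exceed n : measurable (exceed n).
Proof.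
apply: bigcupT_measurable => l.
have -> : [set x | n%:R < `|f l x|] = (fun x => `|f l x|) @^-1` `]n%:R, +oo[.
  by apply/seteqP; split => x /=; rewrite in_itv /= andbT.
by apply: (measurableT_comp (@normr_measurable _ setT) (mf l)) => //; exact: measurable_itv.
Qed.

Lemma nonincreasing_exceed : nonincreasing_seq exceed.
Proof.
apply/nonincreasing_seqP => n; rewrite subsetEset => x [l _ [Dx /= nfl]].
by exists l => //; split => //=; rewrite (le_lt_trans _ nfl)// ler_nat.
Qed.

Lemma bigcap_exceed :
  \bigcap_n exceed n `<=` D `\` [set x | exists K, forall l, `|f l x| <= K].
Proof.
move=> x exx; split; first exact: exceed_sub (exx 0%N I).
move=> [K bdK]; have [l _ [_ /=]] := exx (Num.truncn K).+1 I.
by apply/negP; rewrite -leNgt (le_trans (bdK l))// ltW// truncnS_gt.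
Qed.

Section integral_growth.
Variable a : nat -> nat.
Hypothesis a_incr : {homo a : m n / (m < n)%N}.
Let indic_exceed k x : \bar R := (\1_(exceed (a k)) x)%:E.

Let indic_exceed_ge0 k x : (0 <= indic_exceed k x)%E.
Proof. by rewrite lee_fin indicE ler0n. Qed.

Let measurable_indic_exceed k : measurable_fun D (indic_exceed k).
Proof. by apply/measurable_EFinP; apply: measurable_indic; exact: measurable_exceed. Qed.

Lemma growth_le_series_indic_exceed l x : D x ->
  ((growth a `|f l x|)%:E <= 1 + \sum_(k <oo) indic_exceed k x)%E.
Proof.
move=> Dx; set t := `|f l x|.
apply: (@le_trans _ _ (1 + \sum_(k < (Num.truncn t).+1) (((a k)%:R < t)%R)%:R)%:E).
  by rewrite lee_fin growth_le_count.
rewrite EFinD leeD2l// -sumEFin.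
apply: le_trans (nneseries_lim_ge _ (fun k _ _ => indic_exceed_ge0 k x)).
rewrite big_mkord; apply: lee_sum => k _; rewrite /indic_exceed lee_fin indicE.
case: ltP => [akt|]; last by rewrite ler0n.
by rewrite mem_set//; exists l => //; split.
Qed.

Lemma integral_growth_le :
  (forall k, mu (exceed (a k)) <= (1 / (2 ^ k.+1)%:R)%:E)%E ->
  forall l, (\int[mu]_(x in D) (growth a `|f l x|)%:E <= mu D + 1)%E.
Proof.
move=> mu_exceed_le l.
have mgrowth : measurable_fun D (fun x => (growth a `|f l x|)%:E).
  apply/measurable_EFinP.
  apply: (measurableT_comp (continuous_measurable_fun (continuous_growth a_incr))).
  exact: (measurableT_comp (@normr_measurable _ setT) (mf l)).
have mseries : measurable_fun D (fun x => \sum_(k <oo) indic_exceed k x)%E.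
  apply: ge0_emeasurable_sum => [k x _ _|k _]; first exact: indic_exceed_ge0.
  exact: measurable_indic_exceed.
apply: (le_trans (ge0_le_integral mu mD _ mgrowth _ (growth_le_series_indic_exceed l))).
- by move=> x _; rewrite lee_fin growth_ge0.
- by apply: emeasurable_funD => //; exact: measurable_cst.
rewrite ge0_integralD//; last first.
  by move=> x _; apply: nneseries_ge0 => k _ _; exact: indic_exceed_ge0.
rewrite integral_cst// mul1e leeD2l// integral_nneseries//.
apply: le_trans (epsilon_trick0 xpredT ler01); apply: lee_nneseries.
  by move=> k _ _; apply: integral_ge0 => x _; exact: indic_exceed_ge0.
move=> k _; rewrite integral_indic//; last exact: measurable_exceed.
rewrite (le_trans _ (mu_exceed_le k))// le_measure ?inE//; last exact: measurable_exceed.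
exact: measurableI (measurable_exceed _) mD.
Qed.

End integral_growth.

Hypotheses (muD_fin : (mu D < +oo)%E)
  (ae_bounded : mu.-negligible (D `\` [set x | exists K, forall l, `|f l x| <= K])).

Lemma mu_exceed_lty n : (mu (exceed n) < +oo)%E.
Proof.
apply: le_lt_trans muD_fin; apply: le_measure; rewrite ?inE//; last exact: exceed_sub.
exact: measurable_exceed.
Qed.

Lemma cvg_mu_exceed : mu \o exceed @ \oo --> 0%E.
Proof.
have mu_bigcap0 : mu (\bigcap_n exceed n) = 0%E.
  case: ae_bounded => N [mN muN0 subN]; apply/eqP; rewrite eq_le measure_ge0 andbT -muN0.
  apply: le_measure; rewrite ?inE//; last exact: subset_trans bigcap_exceed subN.
  by apply: bigcapT_measurable => n; exact: measurable_exceed.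
rewrite -mu_bigcap0; apply: nonincreasing_cvg_mu.
- exact: mu_exceed_lty.
- exact: measurable_exceed.
- by apply: bigcapT_measurable => n; exact: measurable_exceed.
- exact: nonincreasing_exceed.
Qed.

Lemma mu_exceed_eventually_le (e : R) : 0 < e ->
  exists N, forall n, (N <= n)%N -> (mu (exceed n) <= e%:E)%E.
Proof.
move=> e0; have [_ fine_cvg] := (fine_cvgP (mu \o exceed) 0).1 cvg_mu_exceed.
have [N _ HN] := cvgr_le _ fine_cvg _ e0.
exists N => n Nn; rewrite -(fineK (_ : mu (exceed n) \is a fin_num)) ?lee_fin ?HN//.
by rewrite ge0_fin_numE ?measure_ge0 ?mu_exceed_lty.
Qed.

Lemma exists_growth_integral_le : exists a : nat -> nat,
  {homo a : m n / (m < n)%N} /\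
  forall l, (\int[mu]_(x in D) (growth a `|f l x|)%:E <= mu D + 1)%E.
Proof.
have w_gt0 k : 0 < 1 / (2 ^ k.+1)%:R :> R by rewrite divr_gt0// ltr0n expn_gt0.
have [a [a_incr mu_exceed_le]] :=
  increasing_eventually_choice (fun k => mu_exceed_eventually_le (w_gt0 k)).
by exists a; split=> //; exact: integral_growth_le.
Qed.

End tail_sets.

Section plane.
Variable R : realType.

Let box (q : rat * rat * nat) : set (R * R) :=
  let e := (q.2.+1%:R)^-1 in
  `](ratr q.1.1 - e), (ratr q.1.1 + e)[ `*` `](ratr q.1.2 - e), (ratr q.1.2 + e)[.

(* Every open set is the countable union of the rational boxes it contains. *)
Lemma open_measurable_pair (O : set (R * R)) : open O -> measurable O.
Proof.
move=> oO; pose F q := if pselect (box q `<=` O) then box q else set0.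
have -> : O = \bigcup_q F q.
  apply/seteqP; split => [x Ox|x [q _]]; last by rewrite /F; case: pselect => // /[apply].
  have /nbhs_ballP[e /= e0 ballO] := oO x Ox.
  pose n := Num.truncn (2 / e); pose r : R := (n.+1%:R)^-1.
  have r0 : 0 < r by rewrite invr_gt0 ltr0n.
  have re : r < e / 2.
    have := truncnS_gt (2 / e); rewrite -/n ltr_pdivrMr// => ne.
    by rewrite /r -div1r ltr_pdivrMr ?ltr0n// mulrAC (mulrC e); lra.
  have [q1] : exists q1 : rat, ratr q1 \in `](x.1 - r), (x.1 + r)[ by apply: rat_in_itvoo; lra.
  have [q2] : exists q2 : rat, ratr q2 \in `](x.2 - r), (x.2 + r)[ by apply: rat_in_itvoo; lra.
  rewrite !in_itv /= => /andP[h1 h2] /andP[h3 h4].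
  have boxO : box (q1, q2, n) `<=` O.
    move=> z [/=]; rewrite -/r !in_itv /= => /andP[h5 h6] /andP[h7 h8].
    by apply: ballO; split; rewrite /ball /= ltr_norml; apply/andP; split; lra.
  exists (q1, q2, n) => //; rewrite /F; case: pselect => [bO|/(_ boxO)//] /=.
  by split; rewrite /= -/r in_itv /=; apply/andP; split; lra.
apply: countable_bigcupT_measurable => [|q]; first exact: countableP.
rewrite /F; case: pselect => ? /=; last exact: measurable0.
exact: measurableX (measurable_itv _) (measurable_itv _).
Qed.

Lemma leb2_bounded_lty (O : set (R * R)) (M : R) : measurable O ->
  (forall x, O x -> `|x.1| <= M /\ `|x.2| <= M) -> (leb2 R O < +oo)%E.
Proof.
move=> mO bdO; have mI : measurable (`[-M, M] : set R) by exact: measurable_itv.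
have lebI : (lebesgue_measure (`[(- M)%R, M] : set R) < +oo)%E.
  by rewrite lebesgue_measure_itv/=; case: ifP => _; rewrite ?ltry// -EFinB ltry.
have sub : O `<=` (`[-M, M] `*` `[-M, M] : set (R * R)).
  by move=> x /bdO[x1 x2]; split; rewrite /= in_itv /= -ler_norml.
apply: (le_lt_trans (@le_measure _ _ _ (leb2 R) O _ _ _ sub)); rewrite ?inE//.
  exact: measurableX.
rewrite /leb2 /= product_measure1E// lte_mul_pinfty// ?measure_ge0//.
by rewrite ge0_fin_numE ?measure_ge0.
Qed.

End plane.

Theorem lemma4p2 (R : realType) (Omega : set (R * R)) (y : nat -> R * R -> R) :
  open Omega ->
  (exists M : R, forall x, Omega x -> `|x.1| <= M /\ `|x.2| <= M) ->
  (forall l, measurable_fun Omega (y l)) ->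
  (forall l, (leb2 R).-integrable Omega (fun x => (y l x)%:E)) ->
  (leb2 R).-negligible
    (Omega `\` \bigcup_n \bigcap_(l in [set l | (n <= l)%N])
        [set x | `|y n x - y l x| <= 1]) ->
  exists (phi : nat -> nat) (psi : R -> R),
    (forall m n, (m < n)%N -> (phi m < phi n)%N) /\
    (forall s t, 0 <= s -> s < t -> psi s < psi t) /\
    {within `[0, +oo[, continuous psi} /\
    (forall t, 0 <= t -> 0 <= psi t) /\
    psi t @[t --> +oo] --> +oo /\
    exists C : R, 0 < C /\
      forall l, (\int[leb2 R]_(x in Omega) (psi `|y (phi l) x|)%:E <= C%:E)%E.
Proof.
move=> oO [M bdO] my _ ae_close.
have mO := open_measurable_pair oO.
have ae_bounded : (leb2 R).-negligible
    (Omega `\` [set x | exists K, forall l, `|y l x| <= K]).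
  apply: negligibleS ae_close => x [Ox unbdx]; split=> // -[n _ close].
  by apply/unbdx/(@bounded_if_eventually_close _ (y ^~ x) n) => l; exact: close.
have muO_fin := leb2_bounded_lty mO bdO.
have [a [a_incr int_le]] :=
  @exists_growth_integral_le _ _ _ (leb2 R) _ _ mO my muO_fin ae_bounded.
exists id, (growth a); split=> //; split=> [s t _|]; first exact: growth_lt.
split; first exact: continuous_subspaceT (continuous_growth a_incr).
split; first exact: growth_ge0.
split; first exact: growth_cvgy.
exists (fine (leb2 R Omega) + 1); split; first by rewrite ltr_wpDl ?fine_ge0.
by move=> l; rewrite EFinD fineK ?int_le// ge0_fin_numE ?measure_ge0.
Qed.
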